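(* Let $D$ be an integral domain. Then every nonzero prime ideal of $R(D)$ is an intersection of ideals of the form $\mathfrak p_f$ with $f\in D\setminus\{0\}$.
   Context: For an integral domain $D$ with fraction field $F$, the reciprocal complement $R(D)$ is the subring of $F$ generated by all $1/d$, $d\in D\setminus\{0\}$. For nonzero $f\in D$, $\mathfrak p_f$ denotes the unique prime ideal of $R(D)$ maximal with respect to not containing $1/f$. *)

From HB Require Import structures.
From mathcomp Require Import all_boot all_order all_algebra.
From mathcomp Require Import fraction.
Set Implicit Arguments. Unset Strict Implicit. Unset Printing Implicit Defensive.
Import Order.TTheory GRing.Theory Num.Theory.
Local Open Scope ring_scope.

Definition emb (D : idomainType) (d : D) : {fraction D} := @FracField.tofrac D d.

(* The reciprocal complement R(D): the subring of the fraction field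
   generated by all 1/d, d in D \ {0} (smallest set containing these
   elements and closed under the ring operations). *)
Inductive RC (D : idomainType) : {fraction D} -> Prop :=
| RC_inv (d : D) : d != 0 -> RC (emb d)^-1
| RC_0 : RC 0
| RC_1 : RC 1
| RC_opp x : RC x -> RC (- x)
| RC_add x y : RC x -> RC y -> RC (x + y)
| RC_mul x y : RC x -> RC y -> RC (x * y).

Definition is_ideal (D : idomainType) (I : {fraction D} -> Prop) : Prop :=
  (forall x, I x -> RC x) /\ I 0 /\
  (forall x y, I x -> I y -> I (x + y)) /\
  (forall r x, RC r -> I x -> I (r * x)).

Definition is_prime_ideal (D : idomainType) (P : {fraction D} -> Prop) : Prop :=
  is_ideal P /\ ~ P 1 /\
  (forall a b, RC a -> RC b -> P (a * b) -> P a \/ P b).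

Definition maximal_avoiding (D : idomainType) (f : D) (P : {fraction D} -> Prop) : Prop :=
  is_prime_ideal P /\ ~ P (emb f)^-1 /\
  (forall Q, is_prime_ideal Q -> ~ Q (emb f)^-1 ->
     (forall x, P x -> Q x) -> forall x, Q x -> P x).

Definition is_p_f (D : idomainType) (f : D) (P : {fraction D} -> Prop) : Prop :=
  maximal_avoiding f P /\
  (forall Q, maximal_avoiding f Q -> forall x, Q x <-> P x).

From HB Require Import structures.
From mathcomp Require Import all_boot all_order all_algebra.
From mathcomp Require Import fraction.
From mathcomp Require Import ring.
From Stdlib Require Import Classical.
Set Implicit Arguments. Unset Strict Implicit. Unset Printing Implicit Defensive.
Import GRing.Theory.
Local Open Scope ring_scope.

(* For every subring A of a field, the reciprocal complement R(A) is local: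
   writing x in R(A) as a sum of reciprocals 1/a_i, one shows by induction on
   the number of a_i outside R(A) that x or 1 - x is a unit.  Applied to the
   localization D_f = D[1/f], whose reciprocal complement is R(D)[f], the
   non-units of R(D_f) cut out on R(D) the largest prime p_f avoiding 1/f.
   Now let P be prime and x in R(D) \ P.  Write x = sum 1/a_i, let f be the
   product of those a_i with 1/a_i outside P, so that 1/f is outside P, and
   split x = y + z where y is in P and z = N/f with N in D.  Then z is a unit
   of R(D_f), i.e. z is not in p_f; as y is in P, which is contained in p_f,
   x is not in p_f either. *)

Lemma perm_partition (T : eqType) (Pr : T -> Prop) (s : seq T) :
  exists s1 s2, [/\ perm_eq s (s1 ++ s2), {in s1, forall a, Pr a}
                  & {in s2, forall a, ~ Pr a}].
Proof.
elim: s => [|c s [s1 [s2 [perm_s in1 in2]]]]; first by exists [::], [::].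
have [Prc | nPrc] := classic (Pr c).
- exists (c :: s1), s2; split; first by rewrite /= perm_cons.
    by move=> a; rewrite inE => /predU1P [-> | /in1].
  exact: in2.
- exists s1, (c :: s2); split => //; last by move=> a; rewrite inE => /predU1P [-> | /in2].
  by rewrite perm_sym -[c :: s2]cat1s perm_catCA /= perm_cons perm_sym.
Qed.

Record is_subring (R : pzRingType) (A : R -> Prop) : Prop := IsSubring {
  subring1 : A 1;
  subringN : forall x, A x -> A (- x);
  subringD : forall x y, A x -> A y -> A (x + y);
  subringM : forall x y, A x -> A y -> A (x * y) }.

Lemma subring0 (R : pzRingType) (A : R -> Prop) : is_subring A -> A 0.
Proof. by case=> A1 AN AD _; rewrite -(subrr 1); apply/AD/AN. Qed.

Section ReciprocalComplement.

Variables (F : fieldType) (A : F -> Prop).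
Hypothesis A_subring : is_subring A.

(* R(A); the [RC] of a domain D is R of the image of D in its fraction field. *)
Inductive recip : F -> Prop :=
| recip_inv a : A a -> a != 0 -> recip a^-1
| recip0 : recip 0
| recip1 : recip 1
| recipN x : recip x -> recip (- x)
| recipD x y : recip x -> recip y -> recip (x + y)
| recipM x y : recip x -> recip y -> recip (x * y).

Definition recip_unit (x : F) := exists2 v, recip v & x * v = 1.

Definition nz_seq (l : seq F) := {in l, forall a, A a /\ a != 0}.

Lemma nz_seq_cons a l : nz_seq (a :: l) <-> (A a /\ a != 0) /\ nz_seq l.
Proof.
split=> [H | [Ha Hl] b]; last by rewrite inE => /predU1P [-> | /Hl].
by split=> [|b bl]; apply: H; rewrite inE ?eqxx ?bl ?orbT.
Qed.

Lemma nz_seq_perm_cat l l1 l2 :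
  perm_eq l (l1 ++ l2) -> nz_seq l -> nz_seq l1 /\ nz_seq l2.
Proof.
move=> perm_l Hl; split=> a al; apply: Hl;
  by rewrite (perm_mem perm_l) mem_cat al ?orbT.
Qed.

Lemma prod_nz_seq_neq0 l : nz_seq l -> \prod_(a <- l) a != 0.
Proof. by move=> Hl; rewrite prodf_seq_neq0; apply/allP => a /Hl []. Qed.

Lemma subring_prod l : nz_seq l -> A (\prod_(a <- l) a).
Proof.
move=> Hl; rewrite big_seq; apply: big_ind => [||a /Hl []//].
  exact: subring1.
exact: subringM.
Qed.

Lemma subring_invsum_prod l :
  nz_seq l -> A ((\sum_(a <- l) a^-1) * \prod_(a <- l) a).
Proof.
elim: l => [|a l IH]; first by rewrite !big_nil mul0r => _; apply: subring0.
case/nz_seq_cons => -[Aa a_neq0] Hl; rewrite !big_cons.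
have -> : (a^-1 + \sum_(b <- l) b^-1) * (a * \prod_(b <- l) b)
          = \prod_(b <- l) b + a * ((\sum_(b <- l) b^-1) * \prod_(b <- l) b).
  by rewrite mulrDl mulrA mulVf // mul1r mulrCA.
by apply: (subringD A_subring); [apply: subring_prod | apply: (subringM A_subring) => //; apply: IH].
Qed.

Lemma recip_invsum l : nz_seq l -> recip (\sum_(a <- l) a^-1).
Proof.
move=> Hl; rewrite big_seq; apply: big_ind => [||a /Hl [Aa a0]].
- exact: recip0.
- exact: recipD.
- exact: recip_inv.
Qed.

Lemma recip_prod l : {in l, forall a, recip a} -> recip (\prod_(a <- l) a).
Proof.
by move=> Hl; rewrite big_seq; apply: big_ind => //; [apply: recip1 | apply: recipM].
Qed.

Lemma nz_seq_opp l : nz_seq l -> nz_seq [seq - a | a <- l].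
Proof.
move=> Hl _ /mapP [a /Hl [Aa a0] ->].
by rewrite oppr_eq0; split => //; apply: (subringN A_subring).
Qed.

Lemma invsum_opp (l : seq F) :
  \sum_(a <- [seq - a | a <- l]) a^-1 = - \sum_(a <- l) a^-1.
Proof. by rewrite big_map -sumrN; apply: eq_bigr => a _; rewrite invrN. Qed.

Lemma recip_invsum_repr x : recip x ->
  exists2 l, nz_seq l & x = \sum_(a <- l) a^-1.
Proof.
elim=> [a Aa a0 | | | y _ [l Hl ->] | y z _ [l Hl ->] _ [m Hm ->]
        | y z _ [l Hl ->] _ [m Hm ->]].
- by exists [:: a]; [apply/nz_seq_cons | rewrite big_seq1].
- by exists [::]; rewrite ?big_nil.
- exists [:: 1]; last by rewrite big_seq1 invr1.
  by apply/nz_seq_cons; split; [split; [apply: subring1 | apply: oner_neq0]|].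
- by exists [seq - a | a <- l]; [apply: nz_seq_opp | rewrite invsum_opp].
- by exists (l ++ m); [move=> a; rewrite mem_cat => /orP [/Hl | /Hm] | rewrite big_cat].
- exists [seq a * b | a <- l, b <- m].
    move=> _ /allpairsP [[a b] /= [/Hl [Aa a0] /Hm [Ab b0] ->]].
    by rewrite mulf_neq0 //; split => //; apply: (subringM A_subring).
  rewrite big_allpairs_dep mulr_suml; apply: eq_bigr => a _.
  by rewrite mulr_sumr; apply: eq_bigr => b _; rewrite invfM mulrC.
Qed.

Definition unit_mod (u x : F) :=
  exists y r, [/\ recip y, recip r & x * y = 1 + u * r].

Lemma unit_modM u x y :
  recip u -> unit_mod u x -> unit_mod u y -> unit_mod u (x * y).
Proof.
move=> Ru [y1 [r1 [Ry1 Rr1 E1]]] [y2 [r2 [Ry2 Rr2 E2]]].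
exists (y1 * y2), (r1 + r2 + u * r1 * r2); split; first exact: recipM.
  by apply: recipD; [apply: recipD | apply: recipM => //; apply: recipM].
by rewrite mulrACA E1 E2; ring.
Qed.

(* Each 1/a is invertible modulo u, hence so is their product, which equals
   u * B / X with 1/X in R(A); so u itself is invertible. *)
Lemma recip_unit_from_sub_inv u B l :
  nz_seq l -> A B -> B != 0 -> recip B -> recip u -> u != 0 ->
  A (u * B * \prod_(a <- l) a) -> {in l, forall a, recip_unit (u - a^-1)} ->
  recip_unit u.
Proof.
move=> Hl AB B0 RB Ru u0 AX drop_unit.
set X := u * B * _ in AX.
have X0 : X != 0 by rewrite !mulf_neq0 // prod_nz_seq_neq0.
have [Y [R [RY RR EY]]] : unit_mod u (\prod_(a <- l) a^-1).
  rewrite big_seq; apply: big_ind => [|x y|a al].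
  - by exists 1, 0; split; [apply: recip1 | apply: recip0 | rewrite mulr0 addr0 mulr1].
  - exact: unit_modM.
  - have [v Rv Ev] := drop_unit a al.
    by exists (- v), (- v); split; [exact: recipN | exact: recipN | rewrite -Ev; ring].
have Einv : \prod_(a <- l) a^-1 = u * (B * X^-1).
  by rewrite prodfV /X !invfM; field; rewrite u0 B0 prod_nz_seq_neq0.
exists (B * X^-1 * Y - R).
  by apply: recipD; [apply: recipM => //; apply: recipM => //; apply: recip_inv | apply: recipN].
by rewrite mulrBr !mulrA -(mulrA u) -Einv EY addrK.
Qed.

(* Typically w is the sum of those 1/b that are units of R(A) and B is the
   product of these b. *)
Lemma recip_unit_add_invsum w B l :
  A B -> B != 0 -> recip B -> A (w * B) -> recip w -> w != 0 ->
  nz_seq l -> {in l, forall a, ~ recip a} -> recip_unit (w + \sum_(a <- l) a^-1).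
Proof.
move=> AB B0 RB AwB Rw w0; have [n] := ubnP (size l).
elim: n l => // n IH l /ltnSE size_l Hl Hnr.
set u := w + _.
have drop_unit : {in l, forall a, recip_unit (u - a^-1)}.
  move=> a al; rewrite /u (big_rem _ al) addrCA addrAC subrr add0r.
  apply: IH; first by rewrite size_rem // (leq_trans _ size_l) // ltn_predL; case: (l) al.
  + by move=> b /mem_rem /Hl.
  + by move=> b /mem_rem /Hnr.
have u0 : u != 0.
  have [l0 | [a al]] : l = [::] \/ exists a, a \in l.
    by case: (l) => [|a s]; [left | right; exists a; apply: mem_head].
  - by rewrite /u l0 big_nil addr0.
  - apply/eqP => u_eq0; apply: (Hnr a al).
    have [v Rv] := drop_unit a al.
    rewrite u_eq0 sub0r mulNr => /eqP; rewrite eqr_oppLR => /eqP Ev.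
    have a0 : a != 0 by case: (Hl a al).
    suff -> : a = - v by apply: recipN.
    by apply: (mulfI (invr_neq0 a0)); rewrite mulrN Ev opprK mulVf.
apply: (recip_unit_from_sub_inv (B := B) Hl) => //.
  by apply: recipD => //; apply: recip_invsum.
have -> : u * B * \prod_(a <- l) a
          = w * B * \prod_(a <- l) a + B * ((\sum_(a <- l) a^-1) * \prod_(a <- l) a).
  by rewrite /u; ring.
apply: (subringD A_subring); apply: (subringM A_subring) => //.
  exact: subring_prod.
exact: subring_invsum_prod.
Qed.

Lemma recip_local x : recip x -> recip_unit x \/ recip_unit (1 - x).
Proof.
case/recip_invsum_repr => l Hl ->.
have [lu [ln [perm_l Hlu Hln]]] := perm_partition recip l.
have [nz_lu nz_ln] := nz_seq_perm_cat perm_l Hl.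
rewrite (perm_big _ perm_l) big_cat /=.
have [w0 | w_neq0] := eqVneq (\sum_(a <- lu) a^-1) 0.
- right; rewrite w0 add0r -invsum_opp.
  have A1 : A 1 by apply: subring1.
  apply: (recip_unit_add_invsum (B := 1)); rewrite ?mulr1 ?oner_neq0 //.
  + exact: recip1.
  + exact: recip1.
  + exact: nz_seq_opp.
  + by move=> _ /mapP [a al ->] /recipN; rewrite opprK; apply: Hln.
- left; apply: (recip_unit_add_invsum (B := \prod_(a <- lu) a)) => //.
  + exact: subring_prod.
  + exact: prod_nz_seq_neq0.
  + exact: recip_prod.
  + exact: subring_invsum_prod.
  + exact: recip_invsum.
Qed.

Lemma recip_unit_add x y : recip x -> recip y ->
  recip_unit (x + y) -> recip_unit x \/ recip_unit y.
Proof.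
move=> Rx Ry [v Rv Ev].
have [[z Rz Ez] | [z Rz Ez]] := recip_local (recipM Rx Rv).
- by left; exists (v * z); [apply: recipM | rewrite mulrA].
- by right; exists (v * z); [apply: recipM | rewrite -Ez -Ev; ring].
Qed.

End ReciprocalComplement.

Lemma addf_div_exp (F : fieldType) (a b c : F) k j : c != 0 ->
  a / c ^+ k + b / c ^+ j = (a * c ^+ j + b * c ^+ k) / c ^+ (k + j).
Proof. by move=> c0; rewrite exprD; field; rewrite !expf_neq0. Qed.

Section ReciprocalComplementOfDomain.

Variable D : idomainType.
Local Notation F := {fraction D}.

Definition in_dom (z : F) := exists d, z = emb d.

Definition in_loc (f : D) (z : F) := exists d k, z = emb d / emb f ^+ k.

Lemma emb_eq0 (d : D) : (emb d == 0) = (d == 0).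
Proof. exact: tofrac_eq0. Qed.

Lemma in_dom_subring : is_subring in_dom.
Proof.
split; first by exists 1; rewrite /emb tofrac1.
- by move=> _ [d ->]; exists (- d); rewrite /emb tofracN.
- by move=> _ _ [d ->] [e ->]; exists (d + e); rewrite /emb tofracD.
- by move=> _ _ [d ->] [e ->]; exists (d * e); rewrite /emb tofracM.
Qed.

Lemma in_loc_subring f : f != 0 -> is_subring (in_loc f).
Proof.
move=> f0; split; first by exists 1, 0%N; rewrite /emb tofrac1 expr0 divr1.
- by move=> _ [d [k ->]]; exists (- d), k; rewrite /emb tofracN mulNr.
- move=> _ _ [d [k ->]] [e [j ->]]; exists (d * f ^+ j + e * f ^+ k), (k + j)%N.
  by rewrite addf_div_exp ?emb_eq0 // /emb tofracD !tofracM !tofracXn.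
- move=> _ _ [d [k ->]] [e [j ->]]; exists (d * e), (k + j)%N.
  by rewrite /emb tofracM exprD invfM mulrACA.
Qed.

Lemma recip_of_RC (A : F -> Prop) x : (forall d, A (emb d)) -> RC x -> recip A x.
Proof.
move=> A_emb; elim=> [d d0 | | | y _ Ry | y z _ Ry _ Rz | y z _ Ry _ Rz].
- by apply: recip_inv; rewrite ?emb_eq0.
- exact: recip0.
- exact: recip1.
- exact: recipN.
- exact: recipD.
- exact: recipM.
Qed.

Lemma RC_prod (I : eqType) (r : seq I) (G : I -> F) :
  {in r, forall i, RC (G i)} -> RC (\prod_(i <- r) G i).
Proof.
by move=> RG; rewrite big_seq; apply: big_ind => //; [apply: RC_1 | apply: RC_mul].
Qed.

Lemma recip_loc_emb f : f != 0 -> recip (in_loc f) (emb f).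
Proof.
move=> f0; rewrite -[emb f]invrK; apply: recip_inv; last by rewrite invr_eq0 emb_eq0.
by exists 1, 1%N; rewrite expr1 /emb tofrac1 div1r.
Qed.

Lemma recip_loc_decomp f z : f != 0 -> recip (in_loc f) z ->
  exists r n, RC r /\ z = r / (emb f)^-1 ^+ n.
Proof.
move=> f0; have g0 : (emb f)^-1 != 0 by rewrite invr_eq0 emb_eq0.
have Rg : RC (emb f)^-1 by apply: RC_inv.
elim=> [_ [d [k ->]] z0 | | | y _ [r [n [Rr ->]]]
        | y y' _ [r [n [Rr ->]]] _ [s [m [Rs ->]]]
        | y y' _ [r [n [Rr ->]]] _ [s [m [Rs ->]]]].
- have d0 : d != 0 by apply: contraNneq z0 => ->; rewrite /emb tofrac0 mul0r.
  exists (emb d)^-1, k; split; first exact: RC_inv.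
  by rewrite invfM invrK exprVn invrK.
- by exists 0, 0%N; split; [apply: RC_0 | rewrite mul0r].
- by exists 1, 0%N; split; [apply: RC_1 | rewrite expr0 divr1].
- by exists (- r), n; split; [apply: RC_opp | rewrite mulNr].
- exists (r * (emb f)^-1 ^+ m + s * (emb f)^-1 ^+ n), (n + m)%N.
  split; last exact: addf_div_exp.
  have Rgk k : RC ((emb f)^-1 ^+ k).
    by rewrite -[k]subn0 -prodr_const_nat; apply: RC_prod.
  by apply: RC_add; apply: RC_mul.
- by exists (r * s), (n + m)%N; split; [apply: RC_mul | rewrite mulf_div exprD].
Qed.

(* p_f is the contraction to R(D) of the maximal ideal of the local ring
   R(D_f) = R(D)[f]. *)
Definition pf (f : D) (x : F) := RC x /\ ~ recip_unit (in_loc f) x.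

Lemma pf_prime f : f != 0 -> is_prime_ideal (pf f).
Proof.
move=> f0; have loc_subring := in_loc_subring f0.
have RC_loc y : RC y -> recip (in_loc f) y.
  by apply: recip_of_RC => d; exists d, 0%N; rewrite expr0 divr1.
split; [split; [|split; [|split]] | split].
- by move=> x [].
- split; first exact: RC_0.
  by case=> v _; rewrite mul0r => /eqP; rewrite eq_sym oner_eq0.
- move=> x y [Rx nux] [Ry nuy]; split; first exact: RC_add.
  by case/(recip_unit_add loc_subring (RC_loc _ Rx) (RC_loc _ Ry)).
- move=> r x Rr [Rx nux]; split; first exact: RC_mul.
  case=> v Rv Ev; apply: nux; exists (r * v); first by apply: recipM => //; apply: RC_loc.
  by rewrite mulrCA mulrA.
- by case=> _; apply; exists 1; [apply: recip1 | rewrite mulr1].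
- move=> a b Ra Rb [Rab nuab].
  have [ua | nua] := classic (recip_unit (in_loc f) a); last by left.
  have [ub | nub] := classic (recip_unit (in_loc f) b); last by right.
  case: nuab; case: ua => [va Rva Ea]; case: ub => [vb Rvb Eb].
  by exists (va * vb); [apply: recipM | rewrite mulrACA Ea Eb mulr1].
Qed.

Lemma pf_notin f : f != 0 -> ~ pf f (emb f)^-1.
Proof.
move=> f0 [_]; apply; exists (emb f); first exact: recip_loc_emb.
by rewrite mulVf ?invr_eq0 ?emb_eq0.
Qed.

Lemma prime_ideal_notin_prod (P : F -> Prop) (I : eqType) (r : seq I) (G : I -> F) :
  is_prime_ideal P -> {in r, forall i, RC (G i) /\ ~ P (G i)} ->
  ~ P (\prod_(i <- r) G i).
Proof.
move=> [_ [nP1 P_prime]]; elim: r => [|i r IH] HG; first by rewrite big_nil.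
have [RGi nPGi] := HG i (mem_head i r).
have Hr : {in r, forall j, RC (G j) /\ ~ P (G j)}.
  by move=> j jr; apply: HG; rewrite inE jr orbT.
have Rr : RC (\prod_(j <- r) G j) by apply: RC_prod => j /Hr [].
by rewrite big_cons => /(P_prime _ _ RGi Rr) [|/IH].
Qed.

Lemma prime_ideal_sub_pf f (Q : F -> Prop) :
  f != 0 -> is_prime_ideal Q -> ~ Q (emb f)^-1 -> forall x, Q x -> pf f x.
Proof.
move=> f0 Q_prime nQf x Qx; have [[Q_RC [_ [_ QM]]] _] := Q_prime.
split; first exact: Q_RC.
case=> v /(recip_loc_decomp f0) [r [n [Rr ->]]] Ev.
have : ~ Q (\prod_(0 <= i < n) (emb f)^-1).
  by apply: prime_ideal_notin_prod => // i _; split => //; apply: RC_inv.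
rewrite prodr_const_nat subn0; apply.
have -> : (emb f)^-1 ^+ n = r * x.
  rewrite -[LHS]mul1r -Ev -mulrA divfK 1?mulrC //.
  by rewrite expf_neq0 // invr_eq0 emb_eq0.
exact: QM.
Qed.

Lemma pf_is_p_f f : f != 0 -> is_p_f f (pf f).
Proof.
move=> f0; have pf_maximal : maximal_avoiding f (pf f).
  split; first exact: pf_prime.
  by split; [apply: pf_notin | move=> Q Q_prime nQf _; apply: prime_ideal_sub_pf].
split=> // Q [Q_prime [nQf Q_max]] x; split; first exact: prime_ideal_sub_pf.
by apply: Q_max; [apply: pf_prime | apply: pf_notin | apply: prime_ideal_sub_pf].
Qed.

Lemma ideal_sub (I : F -> Prop) x y : is_ideal I -> I x -> I y -> I (x - y).
Proof.
move=> [_ [_ [ID IM]]] Ix Iy; rewrite -mulN1r; apply: ID => //.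
by apply: IM => //; apply/RC_opp/RC_1.
Qed.

Lemma ideal_invsum (I : F -> Prop) l :
  is_ideal I -> {in l, forall a, I a^-1} -> I (\sum_(a <- l) a^-1).
Proof. by move=> [_ [I0 [ID _]]] Il; rewrite big_seq; apply: big_ind. Qed.

Lemma invsum_unit_loc f l : nz_seq in_dom l -> emb f = \prod_(a <- l) a ->
  \sum_(a <- l) a^-1 != 0 -> recip_unit (in_loc f) (\sum_(a <- l) a^-1).
Proof.
move=> Hl Ef sum0; have F0 : emb f != 0 by rewrite Ef (prod_nz_seq_neq0 Hl).
have [N EN] := subring_invsum_prod in_dom_subring Hl; rewrite -Ef in EN.
have N0 : emb N != 0 by rewrite -EN mulf_neq0.
exists (emb f / emb N).
  apply: recipM; first by apply: recip_loc_emb; rewrite -emb_eq0.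
  by apply: recip_inv => //; exists N, 0%N; rewrite expr0 divr1.
by rewrite mulrA EN mulfV.
Qed.

Lemma pf_avoiding_notin (P : F -> Prop) x :
  is_prime_ideal P -> RC x -> ~ P x -> exists f, [/\ f != 0, ~ P (emb f)^-1 & ~ pf f x].
Proof.
move=> P_prime Rx nPx; have [P_ideal _] := P_prime.
have Rx_dom : recip in_dom x by apply: recip_of_RC Rx => d; exists d.
have [l Hl x_eq] := recip_invsum_repr in_dom_subring Rx_dom.
have [lP [lQ [perm_l HlP HlQ]]] := perm_partition (fun a => P a^-1) l.
have [nz_lP nz_lQ] := nz_seq_perm_cat perm_l Hl.
have {x_eq} x_eq : x = \sum_(a <- lP) a^-1 + \sum_(a <- lQ) a^-1.
  by rewrite x_eq (perm_big _ perm_l) big_cat.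
have P_lP := ideal_invsum P_ideal HlP.
have [f Ef] := subring_prod in_dom_subring nz_lQ.
have f0 : f != 0 by rewrite -emb_eq0 -Ef (prod_nz_seq_neq0 nz_lQ).
have nPf : ~ P (emb f)^-1.
  rewrite -Ef -prodfV; apply: prime_ideal_notin_prod => // a al.
  split; last exact: HlQ.
  by have [[d ->] a0] := nz_lQ a al; apply: RC_inv; rewrite -emb_eq0.
exists f; split=> // pf_x.
have sumQ0 : \sum_(a <- lQ) a^-1 != 0.
  by apply/eqP => sum0; apply: nPx; rewrite x_eq sum0 addr0.
have [_] : pf f (\sum_(a <- lQ) a^-1).
  rewrite -[X in pf f X](addKr (\sum_(a <- lP) a^-1)) addrC -x_eq.
  apply: ideal_sub (pf_prime f0).1 pf_x _.
  exact: prime_ideal_sub_pf P_lP.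
by apply; apply: invsum_unit_loc (esym Ef) _.
Qed.

End ReciprocalComplementOfDomain.

Theorem mainTheorem17 (D : idomainType) (P : {fraction D} -> Prop) :
  is_prime_ideal P -> (exists x, P x /\ x != 0) ->
  exists Fam : ({fraction D} -> Prop) -> Prop,
    (forall Q, Fam Q -> exists f : D, f != 0 /\ is_p_f f Q) /\
    (forall x, P x <-> (RC x /\ forall Q, Fam Q -> Q x)).
Proof.
move=> P_prime _; have P_RC := P_prime.1.1.
exists (fun Q => exists f : D, [/\ f != 0, ~ P (emb f)^-1 & Q = pf f]).
split=> [_ [f [f0 _ ->]] | x]; first by exists f; split; last exact: pf_is_p_f.
split=> [Px | [Rx in_pf]].
  by split=> [|_ [f [f0 nPf ->]]]; [apply: P_RC | apply: prime_ideal_sub_pf Px].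
apply: NNPP => nPx; have [f [f0 nPf npf_x]] := pf_avoiding_notin P_prime Rx nPx.
by apply: npf_x; apply: in_pf; exists f.
Qed.
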